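(* Suppose $F$ is symmetric ($F(-i)=1-F(i)$ for all $i$), let $R\in(0,1)$, $\beta=F(1/2-R)$, $Q=(q_1+q_2)/2$ and $\sigma=q_H/q_L$. Then $\pi^B=\frac{(1-2Q)\sigma}{1+\sigma}+2Q\beta$, $\Delta_O^B=\frac{\beta Q(\sigma+1)-2Q\sigma+\sigma}{2\beta Q(\sigma+1)-2Q\sigma+\sigma}-\frac{(1-2Q)\sigma}{1+\sigma}-Q$, and the value of the recommendation system is $V(\beta)=\pi^B\Delta_O^B=(1-2Q)\frac{\sigma+Q\left(\beta-\sigma+\sigma^2(1-\beta)\right)}{(\sigma+1)^2}$.
   Context: Setting. Consumer types are $i\in[-1/2,1/2]$, distributed according to a continuous cumulative distribution function $F$ with full support on $[-1/2,1/2]$. A product has a quality vector $(Q_1,Q_2)\in\{0,1\}^2$; a type-$i$ consumer gets payoff $(1/2+i)Q_1+(1/2-i)Q_2$ from it. The versions $(1,1),(1,0),(0,1),(0,0)$ have prior probabilities $q_H,q_1,q_2,q_L$ respectively, all strictly positive and summing to $1$. Given a threshold $R\in(0,1)$, a sender whose type is drawn from $F$ independently of the product gives a buy recommendation $B$ if her payoff from the product is at least $R$ and a don't-buy recommendation $D$ otherwise. Let $\phi_1(R)=1-F(R-1/2)$, $\phi_2(R)=F(1/2-R)$, $\pi^B=q_H+q_1\phi_1(R)+q_2\phi_2(R)$, $\pi^D=1-\pi^B$. Posteriors: $p^B_H=q_H/\pi^B$, $p^B_1=q_1\phi_1(R)/\pi^B$, $p^B_2=q_2\phi_2(R)/\pi^B$;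 $p^D_H=0$, $p^D_1=q_1(1-\phi_1(R))/\pi^D$, $p^D_2=q_2(1-\phi_2(R))/\pi^D$. Let $U_i^r=p_H^r+(1/2+i)p_1^r+(1/2-i)p_2^r$ for $r\in\{B,D\}$ and $U_i^0=q_H+(1/2+i)q_1+(1/2-i)q_2$. The objective effect of the buy recommendation is $\Delta_O^B=p_H^B-q_H+\frac{p_1^B-q_1}{2}+\frac{p_2^B-q_2}{2}$. The value of the recommendation system is $V=\pi^B\int_{-1/2}^{1/2}\max\{U_i^B-U_i^0,0\}\,dF(i)+\pi^D\int_{-1/2}^{1/2}\max\{U_i^D-U_i^0,0\}\,dF(i)$. *)

From HB Require Import structures.
From mathcomp Require Import all_boot all_order all_algebra.
From mathcomp Require Import all_classical all_reals all_analysis.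
Set Implicit Arguments. Unset Strict Implicit. Unset Printing Implicit Defensive.
Import Order.TTheory GRing.Theory Num.Theory.
Local Open Scope classical_set_scope.
Local Open Scope ring_scope.

(* The distribution of consumer (and sender) types is a Borel probability
   measure [mu] on R; its cumulative distribution function is [typeCDF mu]. *)
Definition typeCDF {R : realType} (mu : probability R R) (x : R) : R :=
  fine (mu `]-oo, x]%classic).

Section Model.
Variables (R : realType) (mu : probability R R) (qH q1 q2 qL thr : R).
Let F := typeCDF mu.

Definition phi1 : R := 1 - F (thr - 2^-1).
Definition phi2 : R := F (2^-1 - thr).
Definition piB : R := qH + q1 * phi1 + q2 * phi2.
Definition piD : R := 1 - piB.

Definition pBH : R := qH / piB.
Definition pB1 : R := q1 * phi1 / piB.
Definition pB2 : R := q2 * phi2 / piB.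
Definition pDH : R := 0.
Definition pD1 : R := q1 * (1 - phi1) / piD.
Definition pD2 : R := q2 * (1 - phi2) / piD.

Definition UB (i : R) : R := pBH + (2^-1 + i) * pB1 + (2^-1 - i) * pB2.
Definition UD (i : R) : R := pDH + (2^-1 + i) * pD1 + (2^-1 - i) * pD2.
Definition U0 (i : R) : R := qH + (2^-1 + i) * q1 + (2^-1 - i) * q2.

Definition DeltaOB : R := pBH - qH + (pB1 - q1) / 2 + (pB2 - q2) / 2.

Definition Vrec : \bar R :=
  ((piB%:E * \int[mu]_(i in `[(-(2^-1))%R, (2^-1)%R]%classic) (Num.max (UB i - U0 i) 0)%:E)
   + (piD%:E * \int[mu]_(i in `[(-(2^-1))%R, (2^-1)%R]%classic) (Num.max (UD i - U0 i) 0)%:E))%E.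
End Model.

From HB Require Import structures.
From mathcomp Require Import all_boot all_order all_algebra.
From mathcomp Require Import all_classical all_reals all_analysis.
From mathcomp Require Import measurable_realfun.
From mathcomp Require Import ring lra.
Import Order.TTheory GRing.Theory Num.Theory.
Import numFieldNormedType.Exports.
Local Open Scope classical_set_scope.
Local Open Scope ring_scope.

(* By symmetry of F, phi1 = phi2 = beta, so pi^B, pi^D and all posteriors are
   rational functions of beta and the closed forms are field identities.
   The gain U^B_i - U^0_i is affine in i and nonnegative at both ends of
   [-1/2, 1/2], hence on the whole support; Bayes plausibility
   (pi^B U^B_i + pi^D U^D_i = U^0_i) then makes U^D_i - U^0_i nonpositive.
   So V = pi^B E[U^B_i - U^0_i], and the expectation of an affine function of
   the type is its value at the mean type 0, which is Delta_O^B. *)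

Section posterior_gain.
Context {R : realFieldType} {qH x y qL b : R}.
Let pB := qH + x * b + y * b.

Lemma buy_gain_ge0 : 0 < qH -> 0 < x -> 0 < y -> 0 < qL -> qH + x + y + qL = 1 ->
  0 <= b <= 1 -> 0 <= (qH / pB - qH) + (x * b / pB - x).
Proof.
move=> qH_gt0 x_gt0 y_gt0 qL_gt0 prior_sum /andP[b_ge0 b_le1].
have pB_gt0 : 0 < pB by rewrite /pB; nra.
have -> : (qH / pB - qH) + (x * b / pB - x)
    = ((1 - b) * qH * (y + qL) + b * (qH + x) * qL) / pB.
  have -> : qL = 1 - qH - x - y by lra.
  by move: pB_gt0; rewrite /pB => ?; field; rewrite gt_eqF.
apply: divr_ge0 (ltW pB_gt0); apply: addr_ge0; apply: mulr_ge0; try apply: mulr_ge0; lra.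
Qed.
End posterior_gain.

Section closed_forms.
Context {R : realFieldType} {qH q1 q2 qL b : R}.
Hypotheses (qH_gt0 : 0 < qH) (q1_gt0 : 0 < q1) (q2_gt0 : 0 < q2) (qL_gt0 : 0 < qL).
Hypotheses (prior_sum : qH + q1 + q2 + qL = 1) (b_ge0 : 0 <= b).
Let pB := qH + q1 * b + q2 * b.
Let Q := (q1 + q2) / 2.
Let sigma := qH / qL.
Let D := qH / pB - qH + (q1 * b / pB - q1) / 2 + (q2 * b / pB - q2) / 2.

Let qH_eq : qH = 1 - q1 - q2 - qL.
Proof. by move: prior_sum => *; lra. Qed.

Let denominators_gt0 :
  [/\ 0 < qL, 0 < qL + qH, 0 < qH + qL, 0 < qH + q1 * b + q2 * b
    & 0 < b * (q1 + q2) * (qH + qL) - (q1 + q2) * qH + qH].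
Proof.
move: qH_gt0 q1_gt0 q2_gt0 qL_gt0 prior_sum b_ge0 => *.
have : 0 <= b * (q1 + q2) by apply: mulr_ge0 => //; lra.
split; nra.
Qed.

Local Ltac denominators_neq0 :=
  rewrite -qH_eq; case: denominators_gt0 => *;
  repeat (apply/andP; split); rewrite gt_eqF.

Lemma buy_prob_closed_form : pB = (1 - 2 * Q) * sigma / (1 + sigma) + 2 * Q * b.
Proof. by rewrite /pB /Q /sigma qH_eq; field; denominators_neq0. Qed.

Lemma DeltaOB_closed_form :
  D = (b * Q * (sigma + 1) - 2 * Q * sigma + sigma)
        / (2 * b * Q * (sigma + 1) - 2 * Q * sigma + sigma)
      - (1 - 2 * Q) * sigma / (1 + sigma) - Q.
Proof. by rewrite /D /pB /Q /sigma qH_eq; field; denominators_neq0. Qed.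

Lemma value_closed_form :
  pB * D = (1 - 2 * Q) * (sigma + Q * (b - sigma + sigma ^+ 2 * (1 - b)))
           / (sigma + 1) ^+ 2.
Proof. by rewrite /D /pB /Q /sigma qH_eq; field; denominators_neq0. Qed.
End closed_forms.

Lemma expectation_eq_cdf {d} {T : measurableType d} {R : realType}
    {P : probability T R} {X Y : {RV P >-> R}} :
  (X : T -> R) \in Lfun P 1 -> (Y : T -> R) \in Lfun P 1 ->
  cdf X =1 cdf Y -> ('E_P[X] = 'E_P[Y])%E.
Proof.
move=> LX LY XY; rewrite !expectation_cdf_ccdf//.
by congr (_ - _)%E; apply: eq_integral => r _; rewrite ?ccdf_1_cdf XY.
Qed.

Lemma integral_prob1_set {d} {T : measurableType d} {R : realType}
    {P : probability T R} {A : set T} {f : T -> \bar R} :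
  measurable A -> P A = 1%E -> measurable_fun setT f ->
  (\int[P]_(x in A) f x = \int[P]_x f x)%E.
Proof.
move=> mA PA1 mf; rewrite -(setUv A) integral_setU ?setUv//; last 2 first.
- exact: measurableC.
- exact/disj_setPCl.
rewrite [X in (_ + X)%E]null_set_integral ?adde0//.
- exact: measurableC.
- exact: measurable_funS mf.
by have := probability_setC P mA; rewrite PA1 subee.
Qed.

Definition idR (R : realType) : R -> R := idfun.
HB.instance Definition _ (R : realType) :=
  @isMeasurableFun.Build _ _ _ _ (@idR R) (@measurable_id _ _ setT).

Section type_cdf.
Context {R : realType} {mu : probability R R}.
Local Notation F := (typeCDF mu).

Lemma typeCDFE x : mu `]-oo, x]%classic = (F x)%:E.
Proof. by rewrite /typeCDF fineK// fin_num_measure. Qed.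

Lemma typeCDF_ge0 x : 0 <= F x.
Proof. by rewrite /typeCDF fine_ge0. Qed.

Lemma typeCDF_le1 x : F x <= 1.
Proof. by rewrite -lee_fin -typeCDFE probability_le1. Qed.

Lemma cdf_idR r : cdf (@idR R : {RV mu >-> R}) r = (F r)%:E.
Proof. by rewrite -typeCDFE. Qed.

Lemma typeCDF_itvNyo x : {for x, continuous F} -> mu `]-oo, x[%classic = (F x)%:E.
Proof.
move=> Fx; have mu_fin : mu `]-oo, x[%classic \is a fin_num by rewrite fin_num_measure.
rewrite -(fineK mu_fin); congr (_%:E); set m := fine _.
have mle : m <= F x.
  rewrite -lee_fin /m fineK// -typeCDFE le_measure ?inE//.
  by apply: subset_itvl; rewrite bnd_simp.
apply/eqP; rewrite eq_le mle /=; apply/ler_addgt0Pr => e e0.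
move: Fx => /cvgrPdist_lt/(_ e e0)/nbhs_ballP[r r0 Fr].
have /Fr /= : ball x r (x - r / 2).
  rewrite /ball /= opprB addrC subrK ger0_norm ?divr_ge0 ?ltW//.
  by rewrite ltr_pdivrMr// ltr_pMr// ltr1n.
have : F (x - r / 2) <= m.
  rewrite -lee_fin /m -typeCDFE fineK ?fin_num_measure// le_measure ?inE//.
  by apply: subset_itvl; rewrite bnd_simp ltrBlDr ltrDl divr_gt0.
rewrite ltr_norml => ? /andP[_ ?]; lra.
Qed.

Context {h : R}.
Hypothesis supp : mu `[- h, h]%classic = 1%E.

Lemma typeCDF_eq1 r : h <= r -> F r = 1.
Proof.
move=> hr; apply/eqP; rewrite eq_le typeCDF_le1 -lee_fin -typeCDFE -supp.
by rewrite le_measure ?inE// => x /=; rewrite !in_itv => /andP[_ /le_trans]; apply.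
Qed.

Lemma typeCDF_eq0 r : r < - h -> F r = 0.
Proof.
move=> rh; have muC : mu (~` `[- h, h]%classic) = 0%:E.
  by rewrite probability_setC// supp subee.
apply/eqP; rewrite eq_le typeCDF_ge0 andbT -lee_fin -typeCDFE -muC.
rewrite le_measure ?inE//; first exact: measurableC.
move=> x /=; rewrite !in_itv/= => xr /andP[hx _].
by move: (le_lt_trans hx (le_lt_trans xr rh)); rewrite ltxx.
Qed.

Lemma typeCDF_symmetric :
  (forall i, - h <= i <= h -> F (- i) = 1 - F i) -> forall r, F (- r) = 1 - F r.
Proof.
move=> symm r; have [rh|hr] := leP r h; last first.
  by rewrite (typeCDF_eq1 _ (ltW hr)) (typeCDF_eq0 (- r)) ?subrr// ltrN2.
have [hr|rh'] := leP (- h) r; first by rewrite symm// hr.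
by rewrite (typeCDF_eq0 _ rh') (typeCDF_eq1 (- r)) ?subr0// lerNr ltW.
Qed.
End type_cdf.

Section symmetric_type.
Context {R : realType} {mu : probability R R} {h : R}.
Local Notation F := (typeCDF mu).
Local Notation I := (`[- h, h]%classic : set R).
Hypothesis supp : mu I = 1%E.
Hypothesis F_cont : forall x, {for x, continuous F}.
Hypothesis F_symm : forall i, - h <= i <= h -> F (- i) = 1 - F i.

Lemma idR_Lfun1 : (@idR R : R -> R) \in Lfun mu 1.
Proof.
have mid : measurable_fun [set: R] (EFin \o @idR R).
  exact/measurable_EFinP/measurable_id.
apply/Lfun1_integrable/integrableP; split => //.
rewrite -(integral_prob1_set _ supp) //; last exact: measurableT_comp.
apply: (@le_lt_trans _ _ (\int[mu]_(x in I) (cst h%:E) x)%E).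
  apply: ge0_le_integral => //.
  - exact: measurable_funS (measurableT_comp _ mid).
  - by move=> x; rewrite /= in_itv/= => hx; rewrite lee_fin ler_norml.
by rewrite integral_cst// ltey_eq fin_numM ?fin_num_measure.
Qed.

Lemma expectation_idR : ('E_mu[@idR R] = 0)%E.
Proof.
pose X : {RV mu >-> R} := @idR R.
pose NX : {RV mu >-> R} := (- X)%R.
have LNX : (NX : R -> R) \in Lfun mu 1 := Lfun_oppr_closed idR_Lfun1.
have cdfN r : cdf NX r = cdf X r.
  rewrite cdf_idR; change (mu (NX @^-1` `]-oo, r]%classic) = (F r)%:E).
  have -> : NX @^-1` `]-oo, r]%classic = ~` `]-oo, - r[%classic.
    apply/seteqP; split => x; rewrite /preimage /setC /= !in_itv/= lerNl leNgt.
      by move/negP.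
    by move/negP.
  rewrite probability_setC// typeCDF_itvNyo// (typeCDF_symmetric supp F_symm r).
  by rewrite -EFinB opprB addrC subrK.
have ENX : ('E_mu[NX] = - 'E_mu[X])%E.
  rewrite -mulN1e -expectationZl ?idR_Lfun1// !expectation_def.
  by apply: eq_integral => x _ /=; rewrite mulrN1.
move: ENX (expectation_fin_num idR_Lfun1).
rewrite (expectation_eq_cdf LNX idR_Lfun1 cdfN).
by case: ('E_mu[X])%E => //= e [] e0 _; congr (_%:E); lra.
Qed.

Lemma integral_affine (a c : R) :
  (\int[mu]_(x in I) (a + c * x)%:E = a%:E)%E.
Proof.
pose g := (cst a \+ c \o* @idR R)%R.
have Lc : (c \o* @idR R) \in Lfun mu 1 by apply: Lfun_scale; rewrite ?idR_Lfun1.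
have Lg : g \in Lfun mu 1 by rewrite rpredD ?Lfun_cst.
have mg : measurable_fun setT g by move: (sub_Lfun_mfun Lg); rewrite inE.
have mEg : measurable_fun setT (EFin \o g) by apply/measurable_EFinP.
have -> : (\int[mu]_(x in I) (a + c * x)%:E = \int[mu]_(x in I) (EFin \o g) x)%E.
  by apply: eq_integral => x _; rewrite /= mulrC.
rewrite (integral_prob1_set _ supp mEg)//.
transitivity ('E_mu[g])%E; first by rewrite unlock.
rewrite expectationD ?Lfun_cst// expectation_cst expectationZl ?idR_Lfun1//.
by rewrite expectation_idR mule0 adde0.
Qed.
End symmetric_type.

Section recommendation.
Context {R : realType} {mu : probability R R} {qH q1 q2 qL thr : R}.
Local Notation F := (typeCDF mu).
Local Notation I := (`[- 2^-1, 2^-1]%classic : set R).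
Local Notation phi1 := (phi1 mu thr).
Local Notation phi2 := (phi2 mu thr).
Local Notation piB := (piB mu qH q1 q2 thr).
Local Notation piD := (piD mu qH q1 q2 thr).
Local Notation pBH := (pBH mu qH q1 q2 thr).
Local Notation pB1 := (pB1 mu qH q1 q2 thr).
Local Notation pB2 := (pB2 mu qH q1 q2 thr).
Local Notation UB := (UB mu qH q1 q2 thr).
Local Notation UD := (UD mu qH q1 q2 thr).
Local Notation U0 := (U0 qH q1 q2).
Local Notation DeltaOB := (DeltaOB mu qH q1 q2 thr).

Lemma UB_sub_U0E i : UB i - U0 i =
  (2^-1 + i) * (pBH - qH + (pB1 - q1)) + (2^-1 - i) * (pBH - qH + (pB2 - q2)).
Proof. by rewrite /UB /U0; field. Qed.

Lemma UB_sub_U0_affine i : UB i - U0 i = DeltaOB + ((pB1 - q1) - (pB2 - q2)) * i.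
Proof. by rewrite /UB /U0 /DeltaOB; field. Qed.

Lemma bayes_plausibility i : piB != 0 -> piD != 0 ->
  piB * (UB i - U0 i) + piD * (UD i - U0 i) = 0.
Proof.
move=> piB_neq0; rewrite /UB /UD /U0 /pBH /pB1 /pB2 /pDH /pD1 /pD2 /piD => ?.
by field; apply/andP.
Qed.

Hypotheses (qH_gt0 : 0 < qH) (q1_gt0 : 0 < q1) (q2_gt0 : 0 < q2) (qL_gt0 : 0 < qL).
Hypothesis prior_sum : qH + q1 + q2 + qL = 1.

Let phi1_01 : 0 <= phi1 <= 1.
Proof. by rewrite subr_ge0 typeCDF_le1 lerBlDl lerDr typeCDF_ge0. Qed.

Let phi2_01 : 0 <= phi2 <= 1.
Proof. by rewrite typeCDF_ge0 typeCDF_le1. Qed.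

Lemma piB_gt0 : 0 < piB.
Proof.
move: qH_gt0 q1_gt0 q2_gt0 phi1_01 phi2_01 => ? ? ? /andP[? ?] /andP[? ?].
by rewrite /piB; nra.
Qed.

Lemma piD_gt0 : 0 < piD.
Proof.
move: qL_gt0 q1_gt0 q2_gt0 prior_sum phi1_01 phi2_01 => ? ? ? ? /andP[? ?] /andP[? ?].
by rewrite /piD /piB; nra.
Qed.

Hypothesis supp : mu I = 1%E.
Hypothesis F_symm : forall i, - 2^-1 <= i <= 2^-1 -> F (- i) = 1 - F i.

Lemma phi1_eq_phi2 : phi1 = phi2.
Proof. by rewrite /phi1 /phi2 -(typeCDF_symmetric supp F_symm) opprB. Qed.

Lemma U0_le_UB i : - 2^-1 <= i <= 2^-1 -> U0 i <= UB i.
Proof.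
move=> /andP[hi ih]; rewrite -subr_ge0 UB_sub_U0E /pBH /pB1 /pB2 /piB -phi1_eq_phi2.
have gain1 := buy_gain_ge0 qH_gt0 q1_gt0 q2_gt0 qL_gt0 prior_sum phi1_01.
have prior_sum' : qH + q2 + q1 + qL = 1 by rewrite (addrAC qH q2).
have := buy_gain_ge0 qH_gt0 q2_gt0 q1_gt0 qL_gt0 prior_sum' phi1_01.
rewrite (addrAC qH (q2 * phi1)) => gain2.
by apply: addr_ge0; apply: mulr_ge0 => //; lra.
Qed.

Lemma UD_le_U0 i : - 2^-1 <= i <= 2^-1 -> UD i <= U0 i.
Proof.
move=> Ii; have := bayes_plausibility i (lt0r_neq0 piB_gt0) (lt0r_neq0 piD_gt0).
have := U0_le_UB i Ii; have := piB_gt0; have := piD_gt0; nra.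
Qed.

Hypothesis F_cont : forall x, {for x, continuous F}.

Lemma VrecE : Vrec mu qH q1 q2 thr = (piB * DeltaOB)%:E.
Proof.
have int_buy : (\int[mu]_(i in I) (Num.max (UB i - U0 i) 0)%:E = DeltaOB%:E)%E.
  rewrite -(integral_affine supp F_cont F_symm _ ((pB1 - q1) - (pB2 - q2))).
  apply: eq_integral => i; rewrite inE/= in_itv/= => Ii.
  by rewrite max_l ?subr_ge0 ?U0_le_UB// UB_sub_U0_affine.
have int_dont_buy : (\int[mu]_(i in I) (Num.max (UD i - U0 i) 0)%:E = 0)%E.
  rewrite -(integral0 mu I); apply: eq_integral => i; rewrite inE/= in_itv/= => Ii.
  by rewrite max_r ?subr_le0 ?UD_le_U0.
by rewrite /Vrec int_buy int_dont_buy mule0 adde0 -EFinM.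
Qed.
End recommendation.

Theorem lemma1 (R : realType) (mu : probability R R) (qH q1 q2 qL thr : R) :
  (* types supported on [-1/2,1/2] *)
  mu (`[-(2^-1), 2^-1]%classic) = 1%E ->
  (* continuous CDF *)
  (forall x : R, {for x, continuous (typeCDF mu)}) ->
  (* full support on [-1/2,1/2] *)
  (forall a b : R, -(2^-1) <= a -> a < b -> b <= 2^-1 -> typeCDF mu a < typeCDF mu b) ->
  (* symmetry *)
  (forall i : R, -(2^-1) <= i <= 2^-1 -> typeCDF mu (- i) = 1 - typeCDF mu i) ->
  0 < qH -> 0 < q1 -> 0 < q2 -> 0 < qL -> qH + q1 + q2 + qL = 1 ->
  0 < thr < 1 ->
  let beta := typeCDF mu (2^-1 - thr) in
  let Q := (q1 + q2) / 2 in
  let sigma := qH / qL in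
  piB mu qH q1 q2 thr = (1 - 2 * Q) * sigma / (1 + sigma) + 2 * Q * beta /\
  DeltaOB mu qH q1 q2 thr =
    (beta * Q * (sigma + 1) - 2 * Q * sigma + sigma)
      / (2 * beta * Q * (sigma + 1) - 2 * Q * sigma + sigma)
    - (1 - 2 * Q) * sigma / (1 + sigma) - Q /\
  Vrec mu qH q1 q2 thr = (piB mu qH q1 q2 thr * DeltaOB mu qH q1 q2 thr)%:E /\
  piB mu qH q1 q2 thr * DeltaOB mu qH q1 q2 thr =
    (1 - 2 * Q) * (sigma + Q * (beta - sigma + sigma ^+ 2 * (1 - beta)))
      / (sigma + 1) ^+ 2.
Proof.
move=> supp F_cont _ F_symm qH_gt0 q1_gt0 q2_gt0 qL_gt0 prior_sum _ beta Q sigma.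
have phi1E : phi1 mu thr = beta by rewrite (phi1_eq_phi2 supp F_symm).
have piBE : piB mu qH q1 q2 thr = qH + q1 * beta + q2 * beta by rewrite /piB phi1E.
have DeltaOBE : DeltaOB mu qH q1 q2 thr = qH / (qH + q1 * beta + q2 * beta) - qH
    + (q1 * beta / (qH + q1 * beta + q2 * beta) - q1) / 2
    + (q2 * beta / (qH + q1 * beta + q2 * beta) - q2) / 2.
  by rewrite /DeltaOB /pBH /pB1 /pB2 piBE phi1E.
have beta_ge0 : 0 <= beta := typeCDF_ge0 _.
rewrite (VrecE qH_gt0 q1_gt0 q2_gt0 qL_gt0 prior_sum supp F_symm F_cont) piBE DeltaOBE.
split; first exact: buy_prob_closed_form.
split; first exact: DeltaOB_closed_form.
by split; last exact: value_closed_form.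
Qed.
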